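(* Let $p\in\{3,5\}$ and let $H=(a_1,\dots,a_p)^\perp$ be a hyperplane of $\mathbb{R}^p$. If $v\in\mathbb{R}^p$ has pairwise distinct coordinates not summing to $0$, then $|H\cap S_pv|\leq (p-1)!$.
   Context: $S_p$ acts on $\mathbb{R}^p$ by permuting coordinates and $S_pv$ is the orbit of $v$. $(a_1,\dots,a_p)^\perp$ denotes the hyperplane $\{x:\sum_k a_kx_k=0\}$ with $(a_1,\dots,a_p)\neq 0$. *)

From HB Require Import structures.
From mathcomp Require Import all_boot all_order all_algebra all_fingroup.
From mathcomp Require Import reals.
Set Implicit Arguments. Unset Strict Implicit. Unset Printing Implicit Defensive.
Import Order.TTheory GRing.Theory Num.Theory.
Local Open Scope ring_scope.

(* Vectors of R^p are row vectors 'rV[R]_p.  S_p acts by permuting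
   coordinates: s . v = col_perm s v, i.e. (s . v)_k = v_{s k}. *)

Definition Sp_orbit (R : nzRingType) (p : nat) (v : 'rV[R]_p) : seq 'rV[R]_p :=
  undup [seq col_perm s v | s <- enum [set: 'S_p]].

Definition hyperplane (R : nzRingType) (p : nat) (a : 'rV[R]_p) : pred 'rV[R]_p :=
  fun x => \sum_(k < p) a ord0 k * x ord0 k == 0.

Definition card_hyp_orbit (R : nzRingType) (p : nat) (a v : 'rV[R]_p) : nat :=
  size [seq x <- Sp_orbit v | x \in hyperplane a].

(* Sort the coordinates: A_0 <= ... <= A_(p-1) for a and V_0 < ... < V_(p-1)
   for v.  A point of S_p v lies on H iff sum_i A_i V_(c i) = 0 for some
   permutation c.  Summation by parts in both indices writes this sum as a
   constant plus sum_(k,m) (A_(k+1) - A_k) (V_(m+1) - V_m) N_(k,m)(c), where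
   N_(k,m)(c) = #{i > k | c i > m}.  Hence the sum is strictly monotone for the
   dominance order comparing the counts N_(k,m) at the jumps k of A, and the
   zeros form an antichain.  For p = 3, 5 and every jump pattern, the p!
   permutations are covered by (p-1)! chains, which is checked by computation.
   If A has no jump, a is constant and the sum is A_0 (sum_k v_k) <> 0. *)

From HB Require Import structures.
From mathcomp Require Import all_boot all_order all_algebra all_fingroup.
From mathcomp Require Import reals.

Set Implicit Arguments.
Unset Strict Implicit.
Unset Printing Implicit Defensive.

Import Order.TTheory GRing.Theory Num.Theory.
Local Open Scope ring_scope.

Lemma ltr_sum_has (R : numDomainType) (I : eqType) (r : seq I) (F G : I -> R) :
  (forall i, i \in r -> F i <= G i) -> has (fun i => F i < G i) r ->
  \sum_(i <- r) F i < \sum_(i <- r) G i.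
Proof.
move=> le_FG /hasP[i0 r_i0 lt_i0].
have ge0 i : i \in r -> 0 <= G i - F i by move/le_FG; rewrite subr_ge0.
rewrite -subr_gt0 -sumrB big_seq lt0r psumr_neq0 // sumr_ge0 // andbT.
by apply/hasP; exists i0; rewrite ?r_i0 ?subr_gt0.
Qed.

Lemma telescope_mask (V : zmodType) (X : nat -> V) n j : (j < n)%N ->
  X j = X 0%N + \sum_(0 <= m < n.-1) (X m.+1 - X m) *+ (m < j)%N.
Proof.
move=> lt_jn; have le_j : (j <= n.-1)%N by rewrite -ltnS prednK // (leq_ltn_trans _ lt_jn).
under eq_bigr do rewrite mulrb.
rewrite -big_mkcond -(big_nat_widen 0 j n.-1 predT) // telescope_sumr //.
by rewrite addrC subrK.
Qed.

Definition tail_count n k m (c : seq nat) : nat :=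
  count (fun i => (k < i) && (m < nth 0 c i))%N (iota 0 n).

Lemma perm_iota_nth_lt n (c : seq nat) i :
  perm_eq c (iota 0 n) -> (i < n)%N -> (nth 0 c i < n)%N.
Proof.
move=> c_perm lt_in; have size_c : size c = n by rewrite (perm_size c_perm) size_iota.
have : nth 0 c i \in iota 0 n by rewrite -(perm_mem c_perm) mem_nth ?size_c.
by rewrite mem_iota.
Qed.

Definition tail_table n c : seq (seq nat) :=
  [seq [seq tail_count n k m c | m <- iota 0 n.-1] | k <- iota 0 n.-1].

Definition table_entry (t : seq (seq nat)) k m := nth 0 (nth [::] t k) m.

Definition table_below n (K : seq bool) (t u : seq (seq nat)) : bool :=
  all (fun k => nth false K k ==>
         all (fun m => table_entry t k m <= table_entry u k m)%N (iota 0 n.-1))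
    (iota 0 n.-1) &&
  has (fun k => nth false K k &&
         has (fun m => table_entry t k m < table_entry u k m)%N (iota 0 n.-1))
    (iota 0 n.-1).

Definition dominated n K c d := table_below n K (tail_table n c) (tail_table n d).

Lemma table_entry_tail n c k m : (k < n.-1)%N -> (m < n.-1)%N ->
  table_entry (tail_table n c) k m = tail_count n k m c.
Proof.
by move=> lt_k lt_m; rewrite /table_entry (nth_map 0) ?(nth_map 0) ?size_iota ?nth_iota.
Qed.

Lemma dominatedP n K c d : dominated n K c d ->
  (forall k m, (k < n.-1)%N -> (m < n.-1)%N -> nth false K k ->
     (tail_count n k m c <= tail_count n k m d)%N) /\
  exists2 k, (k < n.-1)%N && nth false K k &
    exists2 m, (m < n.-1)%N & (tail_count n k m c < tail_count n k m d)%N.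
Proof.
case/andP=> /allP le_cd /hasP[k k_in /andP[Kk /hasP[m m_in lt_cd]]].
rewrite mem_iota in k_in; rewrite mem_iota in m_in.
split=> [k' m' lt_k' lt_m' Kk'|].
  have k'_in : k' \in iota 0 n.-1 by rewrite mem_iota.
  have m'_in : m' \in iota 0 n.-1 by rewrite mem_iota.
  by move: (le_cd k' k'_in); rewrite Kk' => /allP/(_ m' m'_in); rewrite !table_entry_tail.
by exists k; rewrite ?Kk ?andbT //; exists m; rewrite // -!table_entry_tail.
Qed.

Section Rearrangement.
Variables (R : realDomainType) (n : nat) (A V : nat -> R).

Definition pairing (c : seq nat) := \sum_(0 <= i < n) A i * V (nth 0 c i).

Definition tail_sum (c : seq nat) k := \sum_(0 <= i < n) V (nth 0 c i) *+ (k < i)%N.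

Lemma pairing_abel c : pairing c =
  A 0%N * \sum_(0 <= i < n) V (nth 0 c i) +
  \sum_(0 <= k < n.-1) (A k.+1 - A k) * tail_sum c k.
Proof.
rewrite /pairing /tail_sum; transitivity (\sum_(0 <= i < n) (A 0%N * V (nth 0 c i) +
    \sum_(0 <= k < n.-1) (A k.+1 - A k) * (V (nth 0 c i) *+ (k < i)%N))).
  apply: eq_big_nat => i /andP[_ lt_in].
  rewrite {1}(telescope_mask A lt_in) mulrDl mulr_suml.
  by congr (_ + _); apply: eq_bigr => k _; rewrite mulrnAl mulrnAr.
rewrite big_split /= -mulr_sumr exchange_big /=.
by congr (_ + _); apply: eq_bigr => k _; rewrite mulr_sumr.
Qed.

Lemma tail_sum_abel c k : perm_eq c (iota 0 n) -> tail_sum c k =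
  \sum_(0 <= i < n) V 0%N *+ (k < i)%N +
  \sum_(0 <= m < n.-1) (V m.+1 - V m) *+ tail_count n k m c.
Proof.
move=> c_perm; rewrite /tail_sum; transitivity (\sum_(0 <= i < n) (V 0%N *+ (k < i)%N +
    \sum_(0 <= m < n.-1) (V m.+1 - V m) *+ ((k < i) && (m < nth 0 c i))%N)).
  apply: eq_big_nat => i /andP[_ lt_in].
  rewrite {1}(telescope_mask V (perm_iota_nth_lt c_perm lt_in)) mulrnDl -sumrMnl.
  by congr (_ + _); apply: eq_bigr => m _; rewrite -mulrnA mulnb andbC.
rewrite big_split /= exchange_big /=; congr (_ + _); apply: eq_bigr => m _.
by rewrite sumrMnr /tail_count -sumn_count sumnE big_map /index_iota subn0.
Qed.

Hypothesis V_incr : forall m, (m < n.-1)%N -> V m < V m.+1.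

Lemma tail_sum_le c d k : perm_eq c (iota 0 n) -> perm_eq d (iota 0 n) ->
  (forall m, (m < n.-1)%N -> (tail_count n k m c <= tail_count n k m d)%N) ->
  tail_sum c k <= tail_sum d k.
Proof.
move=> c_perm d_perm le_cd; rewrite !tail_sum_abel // lerD2l.
apply: ler_sum_nat => m /andP[_ lt_m].
by apply: ler_wpMn2l (le_cd m lt_m); rewrite subr_ge0 ltW ?V_incr.
Qed.

Lemma tail_sum_lt c d k : perm_eq c (iota 0 n) -> perm_eq d (iota 0 n) ->
  (forall m, (m < n.-1)%N -> (tail_count n k m c <= tail_count n k m d)%N) ->
  (exists2 m, (m < n.-1)%N & (tail_count n k m c < tail_count n k m d)%N) ->
  tail_sum c k < tail_sum d k.
Proof.
move=> c_perm d_perm le_cd [m0 lt_m0 lt_cd]; rewrite !tail_sum_abel // ltrD2l.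
apply: ltr_sum_has => [m|]; first rewrite mem_index_iota => /andP[_ lt_m].
  by apply: ler_wpMn2l (le_cd m lt_m); rewrite subr_ge0 ltW ?V_incr.
by apply/hasP; exists m0; rewrite ?mem_index_iota // ltr_pMn2l ?subr_gt0 ?V_incr.
Qed.

Variable K : seq bool.
Hypothesis A_nondecr : forall k, (k < n.-1)%N -> A k <= A k.+1.
Hypothesis K_jumps : forall k, (k < n.-1)%N -> nth false K k = (A k < A k.+1).

Lemma dominated_pairing_lt c d : perm_eq c (iota 0 n) -> perm_eq d (iota 0 n) ->
  dominated n K c d -> pairing c < pairing d.
Proof.
move=> c_perm d_perm /dominatedP[le_cd [k0 /andP[lt_k0 Kk0] lt_cd]].
have sumV_perm e : perm_eq e (iota 0 n) ->
    \sum_(0 <= i < n) V (nth 0 e i) = \sum_(i <- iota 0 n) V i.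
  move=> e_perm; rewrite -(perm_big _ e_perm) [RHS](big_nth 0).
  by rewrite (perm_size e_perm) size_iota.
rewrite !pairing_abel !sumV_perm // ltrD2l.
apply: ltr_sum_has => [k|]; first rewrite mem_index_iota => /andP[_ lt_k].
  case Kk: (nth false K k); last first.
    have -> : A k.+1 = A k by apply/eqP; rewrite eq_le A_nondecr // leNgt -K_jumps ?Kk.
    by rewrite subrr !mul0r.
  rewrite ler_wpM2l ?subr_ge0 ?A_nondecr //.
  by apply: tail_sum_le => // m lt_m; apply: le_cd.
apply/hasP; exists k0; rewrite ?mem_index_iota // ltr_pM2l ?subr_gt0 -?K_jumps //.
by apply: tail_sum_lt => // m lt_m; apply: le_cd.
Qed.
End Rearrangement.

Lemma antichain_size_le (T : eqType) (lt : rel T) (chs : seq (seq T)) (z : seq T) :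
  uniq z -> (forall x, x \in z -> has (fun ch => x \in ch) chs) ->
  (forall ch, ch \in chs -> {in ch &, forall x y, [|| x == y, lt x y | lt y x]}) ->
  {in z &, forall x y, ~~ lt x y} ->
  (size z <= size chs)%N.
Proof.
move=> z_uniq z_cov chs_chain z_anti.
pose idx x := find (fun ch => x \in ch) chs.
rewrite -(size_map idx) -(size_iota 0 (size chs)).
apply: uniq_leq_size => [|_ /mapP[x x_in ->]].
  rewrite map_inj_in_uniq // => x y x_in y_in idx_xy.
  have x_ch : x \in nth [::] chs (idx x) := nth_find [::] (z_cov x x_in).
  have y_ch : y \in nth [::] chs (idx y) := nth_find [::] (z_cov y y_in).
  rewrite -idx_xy in y_ch.
  have ch_in : nth [::] chs (idx x) \in chs by rewrite mem_nth // -has_find z_cov.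
  case/or3P: (chs_chain _ ch_in x y x_ch y_ch) => [/eqP // | lt_xy | lt_yx].
    by have := z_anti x y x_in y_in; rewrite lt_xy.
  by have := z_anti y x y_in x_in; rewrite lt_yx.
by rewrite mem_iota /= -has_find z_cov.
Qed.

(* A minimum chain cover of a strict order on 0..N-1, from a maximum matching
   found by Kuhn's augmenting paths: [mate v] is the predecessor of [v] on its
   chain, or the sentinel [N] if [v] starts one.  Nothing is proved about this
   search: its output is validated by [chain_cover_ok]. *)
Section PathCover.
Variables (N : nat) (adj : seq (seq nat)).

Fixpoint augment fuel u (seen : seq bool) (mate : seq nat) : bool * seq bool * seq nat :=
  if fuel is fuel'.+1 then
    (fix try vs seen mate :=
       if vs is v :: vs' then
         if nth true seen v then try vs' seen mate else
         let seen := set_nth false seen v true in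
         let w := nth N mate v in
         if w == N then (true, seen, set_nth N mate v u) else
         let: (found, seen, mate) := augment fuel' w seen mate in
         if found then (true, seen, set_nth N mate v u) else try vs' seen mate
       else (false, seen, mate)) (nth [::] adj u) seen mate
  else (false, seen, mate).

Definition max_matching : seq nat :=
  foldl (fun mate u => (augment N u (nseq N false) mate).2) (nseq N N) (iota 0 N).

Fixpoint follow mate fuel u : seq nat :=
  u :: (if fuel is fuel'.+1 then
          let v := index u mate in if (v < N)%N then follow mate fuel' v else [::]
        else [::]).

Definition path_cover : seq (seq nat) :=
  let mate := max_matching in
  [seq follow mate N u | u <- iota 0 N & nth N mate u == N].
End PathCover.

Definition dominance_chains n K : seq (seq (seq nat)) :=
  let cs := permutations (iota 0 n) in
  let ts := map (tail_table n) cs in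
  let adj :=
    [seq [seq x.1 | x <- zip (iota 0 (size ts)) ts & table_below n K t x.2] | t <- ts] in
  [seq [seq nth [::] cs i | i <- ch] | ch <- path_cover (size cs) adj].

Definition chain_cover_ok n K B :=
  let chs := dominance_chains n K in
  [&& (size chs <= B)%N,
      all (fun c => has (fun ch => c \in ch) chs) (permutations (iota 0 n)) &
      all (fun ch => all (fun c => all (fun d =>
             [|| c == d, dominated n K c d | dominated n K d c]) ch) ch) chs].

Fixpoint bool_seqs m : seq (seq bool) :=
  if m is m'.+1 then [seq b :: K | b <- [:: false; true], K <- bool_seqs m'] else [:: [::]].

Lemma mem_bool_seqs K : K \in bool_seqs (size K).
Proof.
elim: K => [|b K IH] //=.
by rewrite !mem_cat; case: b; rewrite map_f ?orbT.
Qed.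

Definition certified_bound n B :=
  all (fun K => has id K ==> chain_cover_ok n K B) (bool_seqs n.-1).

Lemma certified_bound3 : certified_bound 3 2.
Proof. by vm_compute. Qed.

Lemma certified_bound5 : certified_bound 5 24.
Proof. by vm_compute. Qed.

Definition perm_seq n (s : 'S_n) : seq nat := [seq val (s i) | i <- enum 'I_n].

Lemma nth_perm_seq n (s : 'S_n) (i : 'I_n) : nth 0 (perm_seq s) i = s i.
Proof. by rewrite /perm_seq (nth_map i) ?size_enum_ord // nth_ord_enum. Qed.

Lemma perm_seq_iota n (s : 'S_n) : perm_eq (perm_seq s) (iota 0 n).
Proof.
apply: uniq_perm; [|exact: iota_uniq|].
  by rewrite map_inj_uniq ?enum_uniq // => i j /val_inj /perm_inj.
move=> x; rewrite mem_iota /=; apply/mapP/idP => [[i _ ->] | lt_xn].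
  exact: ltn_ord.
by exists ((s^-1)%g (Ordinal lt_xn)); rewrite ?mem_enum ?permKV.
Qed.

Lemma perm_seq_inj n : injective (@perm_seq n).
Proof.
move=> s t st; apply/permP => i; apply: val_inj.
by have := congr1 (nth 0 ^~ i) st; rewrite /= !nth_perm_seq.
Qed.

Lemma exists_sorting_perm (R : realDomainType) n (f : 'I_n -> R) :
  exists s : 'S_n, forall i j : 'I_n, (i <= j)%N -> f (s i) <= f (s j).
Proof.
set t := [tuple f i | i < n].
have /tuple_permP[s sort_t] : perm_eq (sort <=%R (t : seq R)) t by rewrite perm_sort.
exists s => i j le_ij.
have sorted_t : sorted <=%R (sort <=%R (t : seq R)) by apply/sort_sorted/le_total.
have := sorted_leq_nth le_trans lexx 0 sorted_t; rewrite sort_t size_tuple.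
move=> /(_ i j); rewrite !inE !ltn_ord => /(_ isT isT le_ij).
by rewrite -!tnth_nth !tnth_mktuple.
Qed.

Definition hyp_perms (R : nzRingType) p (a v : 'rV[R]_p) : seq 'S_p :=
  [seq s : 'S_p <- enum [set: 'S_p] | \sum_k a ord0 k * v ord0 (s k) == 0].

Lemma card_hyp_orbit_le (R : nzRingType) p (a v : 'rV[R]_p) :
  (card_hyp_orbit a v <= size (hyp_perms a v))%N.
Proof.
rewrite /card_hyp_orbit /Sp_orbit filter_undup; apply: leq_trans (size_undup _) _.
rewrite filter_map size_map; apply/eq_leq; congr size; apply: eq_filter => s /=.
by rewrite unfold_in /hyperplane; congr (_ == _); apply: eq_bigr => k _; rewrite mxE.
Qed.

Lemma hyp_perms_const (R : idomainType) p (a v : 'rV[R]_p) x :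
  (forall k, a ord0 k = x) -> x != 0 -> \sum_k v ord0 k != 0 -> hyp_perms a v = [::].
Proof.
move=> a_const x_neq0 sum_neq0; apply/nilP; rewrite /nilp size_filter eqn0Ngt -has_count.
apply/hasPn => s _ /=; rewrite (eq_bigr _ (fun k _ => congr1 (fun y => y * _) (a_const k))).
rewrite -mulr_sumr [X in x * X](reindex_inj (@perm_inj _ s^-1)) /=.
by under eq_bigr do rewrite permKV; rewrite mulf_eq0 negb_or x_neq0.
Qed.

Definition coord_along (R : Type) n (u : 'rV[R]_n.+1) (s : 'S_n.+1) (i : nat) :=
  u ord0 (s (inord i)).

Section SortedCoordinates.
Variables (R : realDomainType) (n : nat) (a v : 'rV[R]_n.+1) (pi rho : 'S_n.+1).
Hypothesis pi_sorts : forall i j : 'I_n.+1, (i <= j)%N -> a ord0 (pi i) <= a ord0 (pi j).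
Hypothesis rho_sorts : forall i j : 'I_n.+1, (i <= j)%N -> v ord0 (rho i) <= v ord0 (rho j).
Hypothesis v_inj : injective (fun k => v ord0 k).

Local Notation A := (coord_along a pi).
Local Notation V := (coord_along v rho).

Lemma coord_along_nondecr k : (k < n)%N -> A k <= A k.+1.
Proof. by move=> lt_kn; apply: pi_sorts; rewrite !inordK // ltnW. Qed.

Lemma coord_along_incr m : (m < n)%N -> V m < V m.+1.
Proof.
move=> lt_mn; have le_mn := ltnW lt_mn.
rewrite lt_neqAle rho_sorts ?inordK // andbT.
by apply/eqP => /v_inj/perm_inj/(congr1 (@nat_of_ord _)); rewrite !inordK // => /n_Sn.
Qed.

Lemma coord_along_const :
  ~~ has (fun k => A k < A k.+1) (iota 0 n) -> forall i, a ord0 i = A 0.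
Proof.
move=> /hasPn no_jump.
have A_eq0 k : (k <= n)%N -> A k = A 0.
  elim: k => [//|k IH] lt_kn; rewrite -(IH (ltnW lt_kn)).
  have no_jump_k : ~~ (A k < A k.+1) by apply: no_jump; rewrite mem_iota.
  by apply/eqP; rewrite eq_le leNgt no_jump_k coord_along_nondecr.
by move=> i; rewrite -(A_eq0 _ (leq_ord ((pi^-1)%g i))) /coord_along inord_val permKV.
Qed.

Lemma hyp_sum_pairing (s : 'S_n.+1) :
  \sum_k a ord0 k * v ord0 (s k) = pairing n.+1 A V (perm_seq (pi * s * rho^-1)%g).
Proof.
rewrite (reindex_inj (@perm_inj _ pi)) /pairing big_mkord; apply: eq_bigr => k _.
by rewrite nth_perm_seq /coord_along !inord_val !permM permKV.
Qed.

Lemma hyp_perms_antichain K : (forall k, (k < n)%N -> nth false K k = (A k < A k.+1)) ->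
  {in [seq perm_seq (pi * s * rho^-1)%g | s <- hyp_perms a v] &,
   forall c d, ~~ dominated n.+1 K c d}.
Proof.
move=> K_jumps _ _ /mapP[s s_in ->] /mapP[t t_in ->]; apply/negP => s_below_t.
have := dominated_pairing_lt (n := n.+1) coord_along_incr coord_along_nondecr K_jumps
  (perm_seq_iota _) (perm_seq_iota _) s_below_t.
move: s_in t_in; rewrite !mem_filter -!hyp_sum_pairing => /andP[/eqP-> _] /andP[/eqP-> _].
by rewrite ltxx.
Qed.
End SortedCoordinates.

Lemma card_hyp_orbit_le_certified (R : realDomainType) n B (a v : 'rV[R]_n.+1) :
  certified_bound n.+1 B -> a != 0 -> injective (fun k => v ord0 k) ->
  \sum_k v ord0 k != 0 -> (card_hyp_orbit a v <= B)%N.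
Proof.
move=> cert a_neq0 v_inj sum_neq0; apply: leq_trans (card_hyp_orbit_le a v) _.
have [pi pi_sorts] := exists_sorting_perm (fun k => a ord0 k).
have [rho rho_sorts] := exists_sorting_perm (fun k => v ord0 k).
pose A := coord_along a pi; pose K := [seq A k < A k.+1 | k <- iota 0 n].
have K_jumps k : (k < n)%N -> nth false K k = (A k < A k.+1).
  by move=> lt_kn; rewrite (nth_map 0) ?size_iota ?nth_iota.
have [K_has | K_none] := boolP (has id K); last first.
  have no_jump : ~~ has (fun k => A k < A k.+1) (iota 0 n) by move: K_none; rewrite has_map.
  have a_const := coord_along_const pi_sorts no_jump.
  rewrite (hyp_perms_const a_const) //; apply: contra a_neq0 => /eqP A0_eq0.
  by apply/eqP/rowP => k; rewrite a_const A0_eq0 mxE.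
have /and3P[chs_le chs_cover chs_chains] : chain_cover_ok n.+1 K B.
  have := mem_bool_seqs K; rewrite size_map size_iota => K_in.
  by have := allP cert K K_in; rewrite K_has.
rewrite -(size_map (fun s => perm_seq (pi * s * rho^-1)%g)).
apply: leq_trans chs_le; apply: (antichain_size_le (lt := dominated n.+1 K)).
- rewrite map_inj_uniq => [|s t /perm_seq_inj /mulIg /mulgI //].
  exact/filter_uniq/enum_uniq.
- move=> _ /mapP[s _ ->]; apply: (allP chs_cover).
  by rewrite mem_permutations perm_seq_iota.
- move=> ch ch_in c d c_in d_in.
  exact: (allP (allP (allP chs_chains _ ch_in) _ c_in) _ d_in).
- move=> c d c_in d_in.
  exact: (hyp_perms_antichain pi_sorts rho_sorts v_inj K_jumps c_in d_in).
Qed.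

Theorem corollary4p5 (R : realType) (p : nat) (hp : p = 3%N \/ p = 5%N)
  (a v : 'rV[R]_p) (ha : a != 0)
  (hv : injective (fun k : 'I_p => v ord0 k))
  (hs : \sum_(k < p) v ord0 k != 0) :
  (card_hyp_orbit a v <= (p.-1)`!)%N.
Proof.
case: hp => ->{p} in a v ha hv hs *.
- exact: card_hyp_orbit_le_certified certified_bound3 ha hv hs.
- exact: card_hyp_orbit_le_certified certified_bound5 ha hv hs.
Qed.
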